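(* For $m\ge1$, $\widetilde G_{m,1}=G_{m,1}=(-1)^{m-1}/m$, and \[ \sum_{m\ge1}\sum_{n\ge1}\widetilde G_{m,n+1}x^my^n=\frac{y\log(1+x)-x\log(1+y)}{\log(1+x)-\log(1+y)}\left(\frac{y\log(1+x)+x\log(1+y)}{xy}-1\right). \] Consequently $\widetilde G_{m,n}=\widetilde G_{n-1,m+1}$ for all $m\ge1$, $n\ge2$.
   Context: The generalized Gregory coefficients $G_{m,n}$ ($m,n\ge0$) are defined by $\sum_{m,n\ge0}G_{m,n}x^my^n=\dfrac{y\log^2(1+x)-x\log^2(1+y)}{\log(1+x)-\log(1+y)}$ as formal power series, where $\log^k u=(\log u)^k$. For $m,n\ge1$ define $\widetilde G_{m,n}=G_{m,n}+\sum_{j=0}^{m-2}G_{n-1,j+2}\,G_{m-j-1,2}$ (the sum is empty for $m=1$, so $\widetilde G_{1,n}=G_{1,n}$). *)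

(* Bivariate formal power series over rat, represented
   by their coefficient functions (i,j) |-> coefficient of x^i y^j. *)
From HB Require Import structures.
From mathcomp Require Import all_boot all_order all_algebra.
Set Implicit Arguments. Unset Strict Implicit. Unset Printing Implicit Defensive.
Import Order.TTheory GRing.Theory Num.Theory.
Local Open Scope ring_scope.

Definition ps := nat -> nat -> rat.

Definition peq (F H : ps) : Prop := forall i j, F i j = H i j.

Definition padd (F H : ps) : ps := fun i j => F i j + H i j.
Definition psub (F H : ps) : ps := fun i j => F i j - H i j.
Definition pmul (F H : ps) : ps := fun i j =>
  \sum_(a < i.+1) \sum_(b < j.+1) F a b * H (i - a)%N (j - b)%N.

Definition pone : ps := fun i j => if (i == 0%N) && (j == 0%N) then 1 else 0.
Definition px : ps := fun i j => if (i == 1%N) && (j == 0%N) then 1 else 0.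
Definition py : ps := fun i j => if (i == 0%N) && (j == 1%N) then 1 else 0.

(* coefficients of log(1+t) = sum_{k>=1} (-1)^(k-1) t^k / k *)
Definition lcoef (k : nat) : rat :=
  if k is 0%N then 0 else (-1) ^+ k.-1 / k%:R.
Definition logx : ps := fun i j => if j == 0%N then lcoef i else 0.
Definition logy : ps := fun i j => if i == 0%N then lcoef j else 0.

Definition gregD : ps := psub logx logy.
Definition gregN : ps := psub (pmul py (pmul logx logx)) (pmul px (pmul logy logy)).
Definition numA : ps := psub (pmul py logx) (pmul px logy).
Definition numB : ps := padd (pmul py logx) (pmul px logy).

Definition Gtilde (G : ps) (m n : nat) : rat :=
  G m n + \sum_(0 <= j < m - 1) G (n - 1)%N (j + 2)%N * G (m - j - 1)%N 2%N.

From mathcomp Require Import all_boot all_order all_algebra.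
From mathcomp Require Import zify.
From Stdlib Require Import FunctionalExtensionality Ring.

Set Implicit Arguments.
Unset Strict Implicit.
Unset Printing Implicit Defensive.

Import Order.TTheory GRing.Theory Num.Theory.
Local Open Scope ring_scope.

(* Bivariate series, identified with their coefficient functions, form a
   commutative ring, so identities between series can be checked by [ring].
   Since log(1+x) - log(1+y) = (x - y) Q with Q(0,0) = 1, the series G, A, C
   exist, are unique, and are symmetric in x and y.  Comparing the
   coefficients of y^0, y^1, y^2 in the equation defining G gives
   G(x,0) = 0, [y^1]G = log(1+x) and g2 log(1+x) = log(1+x) - x for
   g2 = [y^2]G.  Writing G = y log(1+x) + y^2 G2, the generating function of
   the G~_{m,n+1} is y G2 + x G2(y,x) g2(x); after multiplication by
   x y log(1+x) (log(1+x) - log(1+y)) the claimed identity becomes a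
   polynomial identity in x, y, log(1+x), log(1+y).  The reflection formula
   is the x <-> y symmetry of A (C - 1). *)

(** * The ring of bivariate series *)

Lemma ps_ext (F H : ps) : peq F H -> F = H.
Proof.
by move=> FH; apply: functional_extensionality => i; apply: functional_extensionality.
Qed.

Lemma eq_peq (F H : ps) : F = H -> peq F H.
Proof. by move->. Qed.

Lemma sum_triangle (R : nmodType) (P : nat -> nat -> R) n :
  \sum_(a < n.+1) \sum_(c < a.+1) P c a = \sum_(c < n.+1) \sum_(e < (n - c).+1) P c (c + e)%N.
Proof.
transitivity (\sum_(a < n.+1) \sum_(c < n.+1 | (c <= a)%N) P c a).
  by apply: eq_bigr => a _; rewrite (big_ord_narrow_leq (ltnSE (ltn_ord a))).
rewrite (exchange_big_dep predT) //=; apply: eq_bigr => c _.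
rewrite -(big_geq_mkord c n.+1 predT) -{1}(add0n c) big_addn big_mkord subSn ?leq_ord //.
by apply: eq_bigr => e _; rewrite addnC.
Qed.

Lemma pmulC F H : pmul F H = pmul H F.
Proof.
apply: ps_ext => i j; rewrite /pmul (reindex_inj rev_ord_inj); apply: eq_bigr => a _.
rewrite (reindex_inj rev_ord_inj); apply: eq_bigr => b _ /=.
by rewrite mulrC !subKn // -ltnS.
Qed.

Lemma pmulA F G H : pmul F (pmul G H) = pmul (pmul F G) H.
Proof.
apply: ps_ext => i j; rewrite /pmul.
transitivity (\sum_(c < i.+1) \sum_(e < (i - c).+1) \sum_(d < j.+1) \sum_(f < (j - d).+1)
   F c d * G e f * H (i - c - e)%N (j - d - f)%N).
  apply: eq_bigr => c _; under eq_bigr => d _ do rewrite big_distrr /=.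
  rewrite exchange_big; apply: eq_bigr => e _; apply: eq_bigr => d _.
  by rewrite big_distrr; apply: eq_bigr => f _; exact: mulrA.
symmetry.
under eq_bigr => a _ do under eq_bigr => b _ do rewrite big_distrl /=.
under eq_bigr => a _ do rewrite exchange_big /=.
under eq_bigr => a _ do under eq_bigr => c _ do under eq_bigr => b _ do rewrite big_distrl /=.
rewrite (sum_triangle (fun c a => \sum_(b < j.+1) \sum_(d < b.+1)
  F c d * G (a - c)%N (b - d)%N * H (i - a)%N (j - b)%N)).
apply: eq_bigr => c _; apply: eq_bigr => e _.
rewrite (sum_triangle (fun d b => F c d * G (c + e - c)%N (b - d)%N * H (i - (c + e))%N (j - b)%N)).
apply: eq_bigr => d _; apply: eq_bigr => f _.
by rewrite !subnDA !addKn.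
Qed.

Lemma pmulDl F G H : pmul (padd F G) H = padd (pmul F H) (pmul G H).
Proof.
apply: ps_ext => i j; rewrite /pmul /padd -big_split; apply: eq_bigr => a _.
by rewrite -big_split; apply: eq_bigr => b _; rewrite mulrDl.
Qed.

(* [pone], [px] and [py] are [pmono 0 0], [pmono 1 0] and [pmono 0 1] up to conversion. *)
Definition pmono (k l : nat) : ps := fun i j => if (i == k) && (j == l) then 1 else 0.

Lemma sum_ord_delta (R : nmodType) n k (f : nat -> R) :
  \sum_(a < n) (if (a == k :> nat) then f a else 0) = if (k < n)%N then f k else 0.
Proof. by rewrite -big_mkcond big_ord1_eq. Qed.

Lemma pmul_monoE k l F i j :
  pmul (pmono k l) F i j = if (k <= i)%N && (l <= j)%N then F (i - k)%N (j - l)%N else 0.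
Proof.
transitivity (\sum_(a < i.+1) if (a == k :> nat) then
  \sum_(b < j.+1) (if (b == l :> nat) then F (i - a)%N (j - b)%N else 0) else 0).
  apply: eq_bigr => a _; rewrite /pmono; case: eqP => _.
    by apply: eq_bigr => b _; case: eqP; rewrite ?mul1r ?mul0r.
  by rewrite big1 // => b _; rewrite mul0r.
under eq_bigr => a _ do rewrite (sum_ord_delta _ _ (fun b => F (i - a)%N (j - b)%N)).
rewrite (sum_ord_delta _ _ (fun a => if (l < j.+1)%N then F (i - a)%N (j - l)%N else 0)) !ltnS.
by case: (k <= i)%N.
Qed.

Lemma pmul1 F : pmul pone F = F.
Proof. by apply: ps_ext => i j; rewrite (pmul_monoE 0 0) !subn0. Qed.

Lemma pmulxE F i j : pmul px F i j = if i is i'.+1 then F i' j else 0.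
Proof. by rewrite (pmul_monoE 1 0); case: i => [|i] //=; rewrite subn0 subn1. Qed.

Lemma pmulyE F i j : pmul py F i j = if j is j'.+1 then F i j' else 0.
Proof. by rewrite (pmul_monoE 0 1) andTb; case: j => [|j] //=; rewrite subn0 subn1. Qed.

Definition pzero : ps := fun _ _ => 0.
Definition popp (F : ps) : ps := fun i j => - F i j.

Lemma ps_ring_theory : ring_theory pzero pone padd pmul psub popp eq.
Proof.
split=> *; apply: ps_ext => i j //; rewrite /padd /popp /pzero.
- exact: add0r.
- exact: addrC.
- exact: addrA.
- by rewrite pmul1.
- by rewrite pmulC.
- by rewrite pmulA.
- by rewrite pmulDl.
- exact: subrr.
Qed.

Add Ring ps_ring : ps_ring_theory.

(** * Cancellation and inverses *)

Lemma pmulIx F H : pmul F px = pmul H px -> F = H.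
Proof.
rewrite !(pmulC _ px) => FH; apply: ps_ext => i j.
by have := congr1 (fun P => P i.+1 j) FH; rewrite !pmulxE.
Qed.

Lemma pmulIy F H : pmul F py = pmul H py -> F = H.
Proof.
rewrite !(pmulC _ py) => FH; apply: ps_ext => i j.
by have := congr1 (fun P => P i j.+1) FH; rewrite !pmulyE.
Qed.

Lemma pmulI_xsuby F H : pmul F (psub px py) = pmul H (psub px py) -> F = H.
Proof.
move=> FH; pose Z := psub F H.
have xZyZ i j : pmul px Z i j = pmul py Z i j.
  have -> : pmul px Z = padd (pmul py Z) (psub (pmul F (psub px py)) (pmul H (psub px py))).
    by rewrite /Z; ring.
  by rewrite FH /padd /psub subrr addr0.
have Z0 i j : Z i j = 0.
  elim: i j => [|i IHi] j.
    by have := xZyZ 0%N j.+1; rewrite pmulxE pmulyE.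
  by have := xZyZ i.+1 j.+1; rewrite pmulxE pmulyE IHi.
transitivity (padd H Z); first by rewrite /Z; ring.
by rewrite (_ : Z = pzero); [ring | apply: ps_ext].
Qed.

Fixpoint pexp (E : ps) (k : nat) : ps := if k is k'.+1 then pmul E (pexp E k') else pone.

Lemma pexp_coef_low E k i j : E 0%N 0%N = 0 -> (i + j < k)%N -> pexp E k i j = 0.
Proof.
move=> E0; elim: k i j => [|k IHk] i j //= ltijk.
rewrite /pmul big1 // => a _; rewrite big1 // => b _.
have [/eqP|ab_gt0] := posnP (a + b).
  by rewrite addn_eq0 => /andP[/eqP-> /eqP->]; rewrite E0 mul0r.
rewrite IHk ?mulr0 //; have := ltn_ord a; have := ltn_ord b; lia.
Qed.

Definition pgeom (E : ps) (n : nat) : ps := fun i j => \sum_(k < n.+1) pexp E k i j.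

Lemma pgeomS E n : pgeom E n.+1 = padd (pgeom E n) (pexp E n.+1).
Proof. by apply: ps_ext => i j; rewrite /pgeom /padd big_ord_recr. Qed.

Lemma pgeom_stable E n i j :
  E 0%N 0%N = 0 -> (i + j <= n)%N -> pgeom E n i j = pgeom E (i + j) i j.
Proof.
move=> E0; elim: n => [|n IHn]; first by rewrite leqn0 => /eqP->.
rewrite leq_eqVlt => /orP[/eqP-> //|lt_ijn].
by rewrite pgeomS /padd pexp_coef_low // addr0 IHn.
Qed.

Lemma pgeomP E n : pmul (psub pone E) (pgeom E n) = psub pone (pexp E n.+1).
Proof.
elim: n => [|n IHn].
  have -> : pgeom E 0 = pone by apply: ps_ext => i j; rewrite /pgeom big_ord1.
  rewrite /=; ring.
rewrite pgeomS.
transitivity (padd (pmul (psub pone E) (pgeom E n)) (pmul (psub pone E) (pexp E n.+1))); first ring.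
rewrite IHn /=; ring.
Qed.

(* With E = 1 - K and E(0,0) = 0, only the terms E^k with k <= i + j of the
   geometric series 1/K = sum_k E^k contribute to the coefficient (i, j). *)
Definition pinv (K : ps) : ps := fun i j => pgeom (psub pone K) (i + j) i j.

Lemma pmulV K : K 0%N 0%N = 1 -> pmul K (pinv K) = pone.
Proof.
move=> K1; pose E := psub pone K.
have E0 : E 0%N 0%N = 0 by rewrite /E /psub K1 subrr.
apply: ps_ext => i j.
transitivity (pmul (psub pone E) (pgeom E (i + j)) i j).
  rewrite (_ : psub pone E = K); last by rewrite /E; ring.
  apply: eq_bigr => a _; apply: eq_bigr => b _.
  rewrite /pinv -/E -(pgeom_stable (n := (i + j)%N) E0) //.
  by have := ltn_ord a; have := ltn_ord b; lia.
by rewrite pgeomP /psub pexp_coef_low ?subr0 //; lia.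
Qed.

Lemma pmulI_unit K : K 0%N 0%N = 1 -> forall F H, pmul F K = pmul H K -> F = H.
Proof.
move=> K1 F H FH.
transitivity (pmul (pmul F K) (pinv K)); first by rewrite -pmulA pmulV //; ring.
by rewrite FH -pmulA pmulV //; ring.
Qed.

(** * Symmetry and divided differences *)

Definition pswap (F : ps) : ps := fun i j => F j i.

Lemma pswap_mul F H : pswap (pmul F H) = pmul (pswap F) (pswap H).
Proof. by apply: ps_ext => i j; rewrite /pswap /pmul exchange_big. Qed.

Lemma pswap_add F H : pswap (padd F H) = padd (pswap F) (pswap H). Proof. by []. Qed.
Lemma pswap_sub F H : pswap (psub F H) = psub (pswap F) (pswap H). Proof. by []. Qed.

Lemma pswap_one : pswap pone = pone.
Proof. by apply: ps_ext => i j; rewrite /pswap /pone andbC. Qed.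
Lemma pswap_x : pswap px = py.
Proof. by apply: ps_ext => i j; rewrite /pswap /px /py andbC. Qed.
Lemma pswap_y : pswap py = px.
Proof. by apply: ps_ext => i j; rewrite /pswap /px /py andbC. Qed.
Lemma pswap_logx : pswap logx = logy. Proof. by []. Qed.
Lemma pswap_logy : pswap logy = logx. Proof. by []. Qed.

Definition pswapE :=
  (pswap_mul, pswap_add, pswap_sub, pswap_one, pswap_x, pswap_y, pswap_logx, pswap_logy).

Definition xseries (K : ps) := forall i j, (0 < j)%N -> K i j = 0.

Lemma xseries_mul F H : xseries F -> xseries H -> xseries (pmul F H).
Proof.
move=> xF xH i j j_gt0; rewrite /pmul big1 // => a _; rewrite big1 // => b _.
have [b0|b_gt0] := posnP b; last by rewrite xF ?mul0r.
by rewrite xH ?mulr0 // b0 subn0.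
Qed.

Lemma xseries_x : xseries px. Proof. by move=> i [|j] //; rewrite /px andbF. Qed.
Lemma xseries_logx : xseries logx. Proof. by move=> i [|j]. Qed.

Definition logx_over_x : ps := fun i j => if j == 0%N then lcoef i.+1 else 0.
Definition logy_over_y : ps := pswap logx_over_x.

Lemma xseries_logx_over_x : xseries logx_over_x. Proof. by move=> i [|j]. Qed.

Lemma logx_over_x00 : logx_over_x 0%N 0%N = 1.
Proof. by rewrite /logx_over_x /lcoef /= divr1. Qed.

Lemma logxE : logx = pmul px logx_over_x.
Proof. by apply: ps_ext => [[|i] j]; rewrite pmulxE // /logx; case: (j == 0%N). Qed.

Lemma logyE : logy = pmul py logy_over_y.
Proof. by rewrite -pswap_logx logxE pswap_mul pswap_x. Qed.

Definition pdivdiff (K : ps) : ps := fun i j => K (i + j).+1 0%N.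

Lemma pdivdiffP K : xseries K -> psub K (pswap K) = pmul (psub px py) (pdivdiff K).
Proof.
move=> xK; apply: ps_ext => i j.
rewrite (_ : pmul _ _ = psub (pmul px (pdivdiff K)) (pmul py (pdivdiff K))); last by ring.
rewrite /psub pmulxE pmulyE /pswap /pdivdiff.
case: i j => [|i] [|j]; rewrite ?subrr ?subr0 //.
- by rewrite (xK 0%N) // add0n.
- by rewrite (xK 0%N) // addn0 subr0.
- by rewrite (xK i.+1) // (xK j.+1) // addnS addSn !subrr.
Qed.

Lemma gregDE : gregD = pmul (psub px py) (pdivdiff logx).
Proof. by rewrite /gregD -pswap_logx pdivdiffP //; exact: xseries_logx. Qed.

Lemma pdivdiff_logx00 : pdivdiff logx 0%N 0%N = 1.
Proof. exact: logx_over_x00. Qed.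

Lemma pmulI_gregD F H : pmul F gregD = pmul H gregD -> F = H.
Proof.
rewrite gregDE => FH; apply: pmulI_xsuby; apply: (pmulI_unit pdivdiff_logx00).
by rewrite -!pmulA.
Qed.

Lemma pmulI_logx F H : pmul F logx = pmul H logx -> F = H.
Proof.
rewrite logxE => FH; apply: pmulIx; apply: (pmulI_unit logx_over_x00).
by rewrite -!pmulA.
Qed.

Lemma pswap_gregD : pswap gregD = popp gregD.
Proof. by rewrite /gregD !pswapE; ring. Qed.

Lemma pswap_quot_gregD F N : pmul F gregD = N -> pswap N = popp N -> pswap F = F.
Proof.
move=> FN N_odd; apply: pmulI_gregD; rewrite FN.
transitivity (popp (pmul (pswap F) (pswap gregD))); first by rewrite pswap_gregD; ring.
by rewrite -pswap_mul FN N_odd; ring.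
Qed.

Lemma pswap_quot_xy F N : pmul (pmul px py) F = N -> pswap N = N -> pswap F = F.
Proof.
move=> FN N_sym; apply: pmulIy; apply: pmulIx.
transitivity (pswap N); first by rewrite -FN !pswapE; ring.
by rewrite N_sym -FN; ring.
Qed.

Lemma pswap_gregN : pswap gregN = popp gregN.
Proof. by rewrite /gregN !pswapE; ring. Qed.

Lemma pswap_numA : pswap numA = popp numA.
Proof. by rewrite /numA !pswapE; ring. Qed.

Lemma pswap_numB : pswap numB = numB.
Proof. by rewrite /numB !pswapE; ring. Qed.

Definition pdiv_gregD (K : ps) : ps := pmul (pdivdiff K) (pinv (pdivdiff logx)).

Lemma pdiv_gregDP K : xseries K -> pmul (pdiv_gregD K) gregD = psub K (pswap K).
Proof.
move=> xK; rewrite gregDE pdivdiffP //.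
transitivity (pmul (pmul (psub px py) (pdivdiff K)) (pmul (pdivdiff logx) (pinv (pdivdiff logx)))).
  by rewrite /pdiv_gregD; ring.
by rewrite pmulV ?pdivdiff_logx00 //; ring.
Qed.

Lemma exists_G : exists G : ps, peq (pmul G gregD) gregN.
Proof.
pose K := pmul px (pmul logx_over_x logx_over_x).
have xK : xseries K.
  by apply: xseries_mul; [exact: xseries_x | apply: xseries_mul; exact: xseries_logx_over_x].
exists (pmul (pmul px py) (pdiv_gregD K)); apply: eq_peq.
rewrite -pmulA (pdiv_gregDP xK) /K !pswapE -/logy_over_y /gregN logxE logyE; ring.
Qed.

Lemma exists_A : exists A : ps, peq (pmul A gregD) numA.
Proof.
exists (pmul (pmul px py) (pdiv_gregD logx_over_x)); apply: eq_peq.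
rewrite -pmulA (pdiv_gregDP xseries_logx_over_x) -/logy_over_y /numA logxE logyE; ring.
Qed.

Lemma exists_C : exists C : ps, peq (pmul (pmul px py) C) numB.
Proof.
exists (padd logx_over_x logy_over_y); apply: eq_peq.
rewrite /numB logxE logyE; ring.
Qed.

(** * Expansion in powers of y *)

Definition at_y0 (F : ps) : ps := fun i j => if j == 0%N then F i 0%N else 0.
Definition pdropy (F : ps) : ps := fun i j => F i j.+1.

Lemma psplit_y F : F = padd (at_y0 F) (pmul py (pdropy F)).
Proof. by apply: ps_ext => i [|j]; rewrite /padd pmulyE /= ?addr0 ?add0r. Qed.

Lemma pmul_at_y0E F K i j : pmul F (at_y0 K) i j = \sum_(a < i.+1) F a j * K (i - a)%N 0%N.
Proof.
apply: eq_bigr => a _; rewrite big_ord_recr /= subnn big1 ?add0r // => b _.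
by rewrite /at_y0 subn_eq0 leqNgt ltn_ord mulr0.
Qed.

Lemma at_y0_mul F H : at_y0 (pmul F H) = pmul (at_y0 F) (at_y0 H).
Proof.
apply: ps_ext => i [|j]; rewrite pmul_at_y0E /=.
  by apply: eq_bigr => a _; rewrite big_ord1.
by rewrite big1 // => a _; rewrite mul0r.
Qed.

Lemma at_y0_sub F H : at_y0 (psub F H) = psub (at_y0 F) (at_y0 H).
Proof. by apply: ps_ext => i [|j]; rewrite /at_y0 /psub //= subr0. Qed.

Lemma at_y0_add F H : at_y0 (padd F H) = padd (at_y0 F) (at_y0 H).
Proof. by apply: ps_ext => i [|j]; rewrite /at_y0 /padd //= addr0. Qed.

Lemma at_y0_xseries K : xseries K -> at_y0 K = K.
Proof. by move=> xK; apply: ps_ext => i [|j] //=; rewrite xK. Qed.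

Lemma at_y0_x : at_y0 px = px. Proof. exact/at_y0_xseries/xseries_x. Qed.
Lemma at_y0_logx : at_y0 logx = logx. Proof. exact/at_y0_xseries/xseries_logx. Qed.

Lemma at_y0_0 : at_y0 pzero = pzero.
Proof. by apply: ps_ext => i [|j]. Qed.

Lemma at_y0_y : at_y0 py = pzero.
Proof. by apply: ps_ext => i [|j]; rewrite /at_y0 /py /= ?andbF. Qed.

Lemma at_y0_logy_over_y : at_y0 logy_over_y = pone.
Proof.
by apply: ps_ext => i [|j]; case: i => [|i]; rewrite /at_y0 /pswap /= ?/lcoef /= ?divr1.
Qed.

Definition at_y0E :=
  (at_y0_mul, at_y0_0, at_y0_add, at_y0_sub, at_y0_x, at_y0_logx, at_y0_y, at_y0_logy_over_y).

(** * The Gregory series *)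

Definition Gtilde_gf (G : ps) : ps :=
  fun m n => if (1 <= m)%N && (1 <= n)%N then Gtilde G m n.+1 else 0.

Lemma Gtilde_gfE F : (forall j, F 0%N j = 0) ->
  Gtilde_gf F = padd (pmul py (pdropy (pdropy F)))
                     (pmul (pmul px (pswap (pdropy (pdropy F)))) (at_y0 (pdropy (pdropy F)))).
Proof.
move=> F0; apply: ps_ext => m n.
rewrite /padd pmulyE pmul_at_y0E big_ord_recl pmulxE mul0r add0r /Gtilde_gf /Gtilde.
rewrite (eq_bigr (fun a : 'I_m => F n a.+2 * F (m - a.+1)%N 2%N)); last first.
  by move=> a _; rewrite pmulxE.
case: m => [|m]; first by rewrite big_ord0 addr0; case: n => [|n] //; rewrite /pdropy F0.
case: n => [|n] /=; first by rewrite add0r big1 // => a _; rewrite F0 mul0r.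
rewrite big_ord_recr /= subnn F0 mulr0 addr0 subn1 big_mkord; congr (_ + _).
by apply: eq_bigr => a _; rewrite addn2 subSS subn1 subnS.
Qed.

Section GregorySeries.

Variable G : ps.
Hypothesis G_def : pmul G gregD = gregN.

Lemma G_sym : pswap G = G.
Proof. exact: pswap_quot_gregD G_def pswap_gregN. Qed.

Lemma G_y0 : at_y0 G = pzero.
Proof.
apply: pmulI_logx; have := congr1 at_y0 G_def.
rewrite /gregD /gregN logyE !at_y0E => E.
transitivity (pmul (at_y0 G) (psub logx (pmul pzero pone))); first ring.
by rewrite E; ring.
Qed.

Lemma G_row0 j : G 0%N j = 0.
Proof. by rewrite -G_sym /pswap; have := congr1 (fun P => P j 0%N) G_y0. Qed.

Lemma pdropy_G_mul_gregD :
  pmul (pdropy G) gregD = psub (pmul logx logx) (pmul px (pmul py (pmul logy_over_y logy_over_y))).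
Proof.
apply: pmulIy; have GE : G = pmul py (pdropy G) by rewrite {1}(psplit_y G) G_y0; ring.
transitivity (pmul G gregD); first by rewrite {2}GE; ring.
by rewrite G_def /gregN logyE; ring.
Qed.

Lemma G_y1 : at_y0 (pdropy G) = logx.
Proof.
apply: pmulI_logx; have := congr1 at_y0 pdropy_G_mul_gregD; rewrite /gregD logyE !at_y0E => E.
transitivity (pmul (at_y0 (pdropy G)) (psub logx (pmul pzero pone))); first ring.
by rewrite E; ring.
Qed.

Lemma G_y2 : pmul (at_y0 (pdropy (pdropy G))) logx = psub logx px.
Proof.
set G2 := pdropy (pdropy G); set Ly := logy_over_y.
have G1E : pdropy G = padd logx (pmul py G2) by rewrite {1}(psplit_y (pdropy G)) G_y1.
have R : pmul (pmul G2 logx) py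
         = pmul (psub (pmul (padd logx (pmul py G2)) Ly) (pmul px (pmul Ly Ly))) py.
  (* D1 - D1 = 0, rewritten once by [pdropy_G_mul_gregD] and once by expanding [pdropy G]. *)
  pose D1 := pmul (pdropy G) gregD.
  transitivity (padd (pmul (pmul G2 logx) py) (psub D1 D1)); first ring.
  by rewrite {1}/D1 pdropy_G_mul_gregD /D1 G1E /gregD logyE -/Ly; ring.
have := congr1 at_y0 (pmulIy R); rewrite /Ly !at_y0E => ->; ring.
Qed.

Variables A C : ps.
Hypothesis A_def : pmul A gregD = numA.
Hypothesis C_def : pmul (pmul px py) C = numB.

Lemma Gtilde_gf_eq : Gtilde_gf G = pmul A (psub C pone).
Proof.
rewrite Gtilde_gfE; last exact: G_row0.
set G2 := pdropy (pdropy G).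
have yyG2 : pmul py (pmul py G2) = psub G (pmul py logx).
  by rewrite {1}(psplit_y G) G_y0 {1}(psplit_y (pdropy G)) G_y1 -/G2; ring.
have xxG2 : pmul px (pmul px (pswap G2)) = psub G (pmul px logy).
  by have := congr1 pswap yyG2; rewrite !pswapE G_sym.
apply: pmulI_gregD; apply: pmulI_logx; apply: pmulIx; apply: pmulIy.
transitivity (padd (pmul (pmul px logx) (pmul gregD (pmul py (pmul py G2))))
                   (pmul (pmul py gregD)
                         (pmul (pmul px (pmul px (pswap G2))) (pmul (at_y0 G2) logx))));
  first ring.
rewrite yyG2 xxG2 G_y2.
transitivity (padd (pmul (pmul px logx) (psub (pmul G gregD) (pmul py (pmul logx gregD))))
                   (pmul py (pmul (psub (pmul G gregD) (pmul px (pmul logy gregD)))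
                                  (psub logx px))));
  first ring.
rewrite G_def.
transitivity (pmul logx (pmul (pmul A gregD) (psub (pmul (pmul px py) C) (pmul px py)))); last ring.
by rewrite A_def C_def /gregN /numA /numB /gregD; ring.
Qed.

End GregorySeries.

Theorem lemma4p5 :
  (exists G : ps, peq (pmul G gregD) gregN) /\
  (exists A : ps, peq (pmul A gregD) numA) /\
  (exists C : ps, peq (pmul (pmul px py) C) numB) /\
  forall G A C : ps,
    peq (pmul G gregD) gregN ->
    peq (pmul A gregD) numA ->
    peq (pmul (pmul px py) C) numB ->
    (forall m : nat, (1 <= m)%N ->
        Gtilde G m 1%N = G m 1%N /\ G m 1%N = (-1) ^+ (m - 1) / m%:R) /\
    peq (fun m n => if (1 <= m)%N && (1 <= n)%N then Gtilde G m n.+1 else 0)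
        (pmul A (psub C pone)) /\
    (forall m n : nat, (1 <= m)%N -> (2 <= n)%N ->
        Gtilde G m n = Gtilde G (n - 1) (m + 1)).
Proof.
split; first exact: exists_G.
split; first exact: exists_A.
split; first exact: exists_C.
move=> G A C /ps_ext G_def /ps_ext A_def /ps_ext C_def.
have gfE := Gtilde_gf_eq G_def A_def C_def.
split.
  move=> [|m] // _; split.
    by rewrite /Gtilde big1 ?addr0 // => j _; rewrite (G_row0 G_def) mul0r.
  by have := congr1 (fun P => P m.+1 0%N) (G_y1 G_def); rewrite subn1.
split; first by move=> m n; rewrite -gfE.
move=> m [|[|n]] m_gt0 // _.
have gf_sym : pswap (Gtilde_gf G) = Gtilde_gf G.
  by rewrite gfE !pswapE (pswap_quot_gregD A_def pswap_numA) (pswap_quot_xy C_def pswap_numB).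
have := congr1 (fun P => P n.+1 m) gf_sym.
by rewrite /pswap /Gtilde_gf m_gt0 /= subn1 addn1.
Qed.
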